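(* Let $n,g,k$ be integers with $g\geq 1$ and $1\leq k\leq n-2g-2$. Then the minimum number of edges of a connected graph $G$ of order $n$ having an $R_g$-cutset with $\kappa_g(G)=k$ equals $n-1$; that is, $s(n,k)=n-1$.
   Context: All graphs are finite and simple. A set $S\subseteq V(G)$ is a cutset if $G-S$ is disconnected. For a non-negative integer $g$, a cutset $S$ is an $R_g$-cutset if every connected component of $G-S$ has at least $g+1$ vertices. If $G$ has at least one $R_g$-cutset, the $g$-extra connectivity $\kappa_g(G)$ is the minimum cardinality of an $R_g$-cutset of $G$. For fixed $g$, $s(n,k)=\min\{|E(G)|: G \text{ connected of order } n,\ \kappa_g(G)=k\}$. *)

From mathcomp Require Import all_boot.
Set Implicit Arguments. Unset Strict Implicit. Unset Printing Implicit Defensive.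

Definition simple_graph (n : nat) (e : rel 'I_n) : Prop :=
  symmetric e /\ irreflexive e.

Definition num_edges (n : nat) (e : rel 'I_n) : nat :=
  #|[set p : 'I_n * 'I_n | e p.1 p.2 && (p.1 < p.2)]|.

Definition connected_graph (n : nat) (e : rel 'I_n) : Prop :=
  forall x y : 'I_n, connect e x y.

Definition del_rel (n : nat) (e : rel 'I_n) (S : {set 'I_n}) : rel 'I_n :=
  fun x y => [&& e x y, x \notin S & y \notin S].

Definition comp_of (n : nat) (e : rel 'I_n) (S : {set 'I_n}) (x : 'I_n) : {set 'I_n} :=
  [set y | (y \notin S) && connect (del_rel e S) x y].

Definition is_cutset (n : nat) (e : rel 'I_n) (S : {set 'I_n}) : Prop :=
  exists x y : 'I_n, [/\ x \notin S, y \notin S & ~~ connect (del_rel e S) x y].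

Definition is_Rg_cutset (g n : nat) (e : rel 'I_n) (S : {set 'I_n}) : Prop :=
  is_cutset e S /\ forall x : 'I_n, x \notin S -> g.+1 <= #|comp_of e S x|.

Definition kappa_g_eq (g n : nat) (e : rel 'I_n) (k : nat) : Prop :=
  (exists S : {set 'I_n}, is_Rg_cutset g e S /\ #|S| = k) /\
  (forall S : {set 'I_n}, is_Rg_cutset g e S -> k <= #|S|).

From mathcomp Require Import all_boot zify.
Set Implicit Arguments. Unset Strict Implicit. Unset Printing Implicit Defensive.

(* We
   orient each non-root vertex towards a neighbour strictly closer to the root
   (in walk distance); the map y |-> {parent y, y} is then an injection of the
   n - 1 non-root vertices into the edge set.

   Upper bound: a tree attains the value.  Trees are presented by a parent
   function p with p v < v on the vertices {0, ..., n}.  We use the "broom"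
   T(n,k,g): the root 0 has children 1, ..., k+1; vertex k carries the g
   pendant vertices k+2, ..., k+g+1, and vertex k+1 the remaining
   n-k-g-1 >= g ones.  Removing S0 = {0, ..., k-1} leaves two stars with at least
   g+1 vertices each, so S0 is an R_g-cutset.  Conversely an R_g-cutset S must
   contain every neighbour of a pendant vertex outside S (a singleton component
   is too small); this forces the root into S (otherwise G - S would be
   connected through it) and then the pendant vertices 1, ..., k-1 as well, so
   |S| >= k and kappa_g(T(n,k,g)) = k. *)

Section EdgeLowerBound.
Variables (n : nat) (e : rel 'I_n).

(* If every vertex y other than the root r has a neighbour par y of smaller
   potential d, then y |-> {par y, y} injects the n - 1 non-root vertices into
   the edges (the potential rules out par y1 = y2 and par y2 = y1). *)
Lemma descent_num_edges (r : 'I_n) (par : 'I_n -> 'I_n) (d : 'I_n -> nat) :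
  symmetric e -> (forall y, y != r -> e (par y) y && (d (par y) < d y)) ->
  n - 1 <= num_edges e.
Proof.
move=> e_sym descent.
pose edge_of y := if par y < y then (par y, y) else (y, par y).
have par_neq y : y != r -> par y != y.
  by move=> /descent /andP [_]; apply: contraTneq => ->; rewrite ltnn.
have edge_inj : {in [set~ r] &, injective edge_of}.
  move=> y1 y2; rewrite !inE => /descent /andP [_ d1] /descent /andP [_ d2].
  rewrite /edge_of; case: ifP => _; case: ifP => _ [] a b //.
  - by move: d2; rewrite -b -a => /(ltn_trans d1); rewrite ltnn.
  - by move: d2; rewrite -a -b => /(ltn_trans d1); rewrite ltnn.
have edge_sub : edge_of @: [set~ r] \subset
    [set p : 'I_n * 'I_n | e p.1 p.2 && (p.1 < p.2)].
  apply/subsetP => p /imsetP [y]; rewrite !inE => yr ->.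
  have /andP [ey _] := descent _ yr.
  have /eqP pyy : (par y : nat) != y by rewrite val_eqE par_neq.
  rewrite /edge_of; case: ifP => /= lt_py; first by rewrite ey lt_py.
  by rewrite e_sym ey /=; lia.
have := subset_leq_card edge_sub.
by rewrite card_in_imset // cardsC1 card_ord subn1.
Qed.

(* In a connected graph the walk distance from r is such a potential. *)
Lemma connected_descent (r : 'I_n) : connected_graph e ->
  exists (par : 'I_n -> 'I_n) (d : 'I_n -> nat),
    forall y, y != r -> e (par y) y && (d (par y) < d y).
Proof.
move=> e_conn.
pose walk_of_length (y : 'I_n) m :=
  [exists p : m.-tuple 'I_n, path e r p && (last r p == y)].
have walk_ex y : exists m, walk_of_length y m.
  have /connectP [p pp ->] := e_conn r y.
  by exists (size p); apply/existsP; exists (in_tuple p); rewrite /= pp eqxx.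
pose dist y := ex_minn (walk_ex y).
have closer y : y != r -> exists z, e z y && (dist z < dist y).
  move=> yr; rewrite /dist; case: ex_minnP => m /existsP [p /andP [pp /eqP pl]] _.
  move: (size_tuple p) pp pl; case/lastP: (tval p) => [|q z] /=.
    by move=> _ _ ry; rewrite -ry eqxx in yr.
  rewrite size_rcons rcons_path last_rcons => <- /andP [pq ez] zy.
  exists (last r q); rewrite -zy ez /=; case: ex_minnP => m' _ /(_ (size q)).
  by rewrite ltnS; apply; apply/existsP; exists (in_tuple q); rewrite /= pq eqxx.
exists (fun y => odflt r [pick z | e z y && (dist z < dist y)]), dist => y yr.
case: pickP => [z //|none] /=.
by have [z] := closer y yr; rewrite none.
Qed.

End EdgeLowerBound.

Lemma connected_num_edges (n : nat) (e : rel 'I_n) :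
  simple_graph e -> connected_graph e -> n - 1 <= num_edges e.
Proof.
case: n e => [|n] e [e_sym _] e_conn //.
have [par [d descent]] := connected_descent ord0 e_conn.
exact: descent_num_edges e_sym descent.
Qed.

Section CutsetFacts.
Variables (n : nat) (e : rel 'I_n) (S : {set 'I_n}).
Local Notation D := (del_rel e S).

Lemma del_rel_sym : symmetric e -> symmetric D.
Proof. by move=> e_sym x y; rewrite /del_rel e_sym; congr andb; apply: andbC. Qed.

Lemma comp_of_isolated x : (forall y, ~~ D x y) -> #|comp_of e S x| <= 1.
Proof.
move=> isolated; rewrite -(cards1 x); apply: subset_leq_card; apply/subsetP => y.
rewrite !inE => /andP [_ /connectP [[|z p] /= walk ->]] //.
by move: walk; rewrite (negbTE (isolated z)).
Qed.

(* For g >= 1 the neighbour y of a pendant vertex x outside an R_g-cutset S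
   lies outside S as well: otherwise {x} would be a component of G - S. *)
Lemma Rg_cutset_pendant g x y : 1 <= g -> is_Rg_cutset g e S -> x \notin S ->
  (forall z, e x z -> z = y) -> y \notin S.
Proof.
move=> g_pos [_ large] xS pendant; apply/negP => yS.
have : #|comp_of e S x| <= 1.
  apply: comp_of_isolated => z; apply/negP => /and3P [/pendant -> _].
  by rewrite yS.
by have := large x xS; lia.
Qed.

Lemma star_sub_comp x h (R : {set 'I_n}) : h \notin S -> connect D x h ->
  (forall w, w \in R -> (w \notin S) && e h w) -> h |: R \subset comp_of e S x.
Proof.
move=> hS xh star; apply/subsetP => w; rewrite !inE => /predU1P [->|wR].
  by rewrite hS xh.
have /andP [wS hw] := star w wR; rewrite wS /=.
by apply: (connect_trans xh); apply: connect1; rewrite /del_rel hw hS wS.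
Qed.

Lemma hub_not_cutset r : symmetric e ->
  (forall x, x \notin S -> connect D r x) -> ~ is_cutset e S.
Proof.
move=> e_sym from_r [x [y [xS yS]]]; apply/negP/negPn.
apply: (connect_trans (y := r)); last exact: from_r.
by rewrite (sym_connect_sym (del_rel_sym e_sym)); exact: from_r.
Qed.

End CutsetFacts.

Section ParentTree.
Variables (n : nat) (p : nat -> nat).
Hypothesis p_lt : forall v, 0 < v -> p v < v.

Definition tree_rel : rel 'I_n.+1 :=
  fun x y => ((0 < x) && (p x == y)) || ((0 < y) && (p y == x)).

Definition children (h : nat) : {set 'I_n.+1} :=
  [set v : 'I_n.+1 | (0 < v) && (p v == h)].

Lemma tree_sym : symmetric tree_rel.
Proof. by move=> x y; rewrite /tree_rel orbC. Qed.

Lemma tree_simple : simple_graph tree_rel.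
Proof.
split=> [|x]; first exact: tree_sym.
rewrite /tree_rel orbb; apply/negP => /andP [x_pos /eqP px].
by have := p_lt x_pos; rewrite px ltnn.
Qed.

Lemma tree_parent_edge (x : 'I_n.+1) : 0 < x -> tree_rel (inord (p x)) x.
Proof.
move=> x_pos; have := p_lt x_pos; have := ltn_ord x => x_lt px_lt.
by rewrite /tree_rel inordK ?eqxx ?x_pos ?orbT //; lia.
Qed.

(* Following parents leads every vertex to the root 0. *)
Lemma tree_connected : connected_graph tree_rel.
Proof.
have from_root (v : 'I_n.+1) : connect tree_rel ord0 v.
  have [m] := ubnP (v : nat); elim: m v => // m IH v v_lt.
  have [v0|v_pos] := posnP v; first by rewrite (_ : v = ord0) //; apply: val_inj.
  have px_lt := p_lt v_pos; have := ltn_ord v => v_ord.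
  apply: (connect_trans (IH (inord (p v)) _)); first by rewrite inordK; lia.
  exact/connect1/tree_parent_edge.
move=> x y; apply: (connect_trans (y := ord0)) => //.
by rewrite (sym_connect_sym tree_sym).
Qed.

(* The edges are exactly the pairs {p y, y} with y > 0. *)
Lemma tree_num_edges : num_edges tree_rel = n.
Proof.
rewrite /num_edges.
have -> : [set q : 'I_n.+1 * 'I_n.+1 | tree_rel q.1 q.2 && (q.1 < q.2)] =
    (fun y : 'I_n.+1 => (inord (p y) : 'I_n.+1, y)) @: [set~ ord0].
  apply/setP => [[a b]]; rewrite inE /=; apply/idP/imsetP.
  - rewrite /tree_rel => /andP [/orP [/andP [a_pos /eqP pa]|/andP [b_pos /eqP pb]] ab].
      by have := p_lt a_pos; lia.
    exists b; first by rewrite !inE -val_eqE /= -lt0n.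
    by congr pair; apply: val_inj; rewrite /= inordK ?pb.
  - case=> y; rewrite !inE -val_eqE /= -lt0n => y_pos [-> ->].
    rewrite tree_parent_edge // inordK; first exact: p_lt.
    by have := p_lt y_pos; have := ltn_ord y; lia.
by rewrite card_imset ?cardsC1 ?card_ord // => y1 y2 [].
Qed.

Lemma tree_leaf_nbr (x y : 'I_n.+1) : 0 < x ->
  (forall u, 0 < u -> p u != x) -> tree_rel x y -> val y = p x.
Proof.
move=> x_pos leaf; rewrite /tree_rel x_pos /= => /orP [/eqP -> //|/andP [y_pos pyx]].
by have := leaf y y_pos; rewrite pyx.
Qed.

Lemma children_comp_card (S : {set 'I_n.+1}) (x h : 'I_n.+1) :
  h \notin S -> connect (del_rel tree_rel S) x h -> children h \subset ~: S ->
  #|children h|.+1 <= #|comp_of tree_rel S x|.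
Proof.
move=> hS xh ch_out; have h_new : h \notin children h.
  by rewrite inE; apply/andP => -[/p_lt h_lt /eqP ph]; rewrite ph ltnn in h_lt.
have star : h |: children h \subset comp_of tree_rel S x.
  apply: star_sub_comp => // w wch; rewrite -in_setC (subsetP ch_out _ wch) /tree_rel.
  by move: wch; rewrite inE => /andP [-> ->]; rewrite orbT.
by have := subset_leq_card star; rewrite cardsU1 h_new.
Qed.

End ParentTree.

Lemma card_interval n lo hi : hi <= n.+1 ->
  #|[set v : 'I_n.+1 | lo <= v < hi]| = hi - lo.
Proof.
move=> hi_le.
have -> : [set v : 'I_n.+1 | lo <= v < hi] =
          (fun i : 'I_(hi - lo) => inord (lo + i) : 'I_n.+1) @: [set: 'I_(hi - lo)].
  apply/setP => v; rewrite inE; apply/idP/imsetP.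
  - move=> /andP [lo_v v_hi]; have i_lt : v - lo < hi - lo by lia.
    exists (Ordinal i_lt); first by rewrite inE.
    by apply: val_inj; rewrite /= inordK; lia.
  - by case=> i _ ->; have := ltn_ord i => i_lt; rewrite inordK; lia.
rewrite card_imset ?cardsT ?card_ord // => i j /(congr1 val) /=.
have := ltn_ord i; have := ltn_ord j => i_lt j_lt.
by rewrite !inordK; try lia; move=> ij; apply: val_inj => /=; lia.
Qed.

Definition broom_parent (k g v : nat) : nat :=
  if v <= k.+1 then 0 else if v <= k + g + 1 then k else k.+1.

Lemma broom_parent_lt k g v : 0 < v -> broom_parent k g v < v.
Proof. by rewrite /broom_parent; case: ifP => ?; [|case: ifP => ?]; lia. Qed.

Lemma broom_parent_le k g v : broom_parent k g v <= k.+1.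
Proof. by rewrite /broom_parent; case: ifP => ?; [|case: ifP => ?]; lia. Qed.

Lemma broom_parent_root k g v : v <= k.+1 -> broom_parent k g v = 0.
Proof. by rewrite /broom_parent => ->. Qed.

Lemma broom_leaf k g x : 0 < x -> x != k -> x != k.+1 ->
  forall u, 0 < u -> broom_parent k g u != x.
Proof.
move=> x_pos xk xk1 u _.
by rewrite /broom_parent; case: ifP => ?; [|case: ifP => ?]; lia.
Qed.

Definition broom_cut (n k : nat) : {set 'I_n.+1} := [set v : 'I_n.+1 | v < k].

Lemma card_broom_cut n k : k <= n.+1 -> #|broom_cut n k| = k.
Proof.
move=> k_le; rewrite -[RHS]subn0 -(card_interval 0 k_le).
by apply: eq_card => v; rewrite !inE.
Qed.

Section Broom.
Variables (n k g : nat).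
Hypotheses (g_pos : 1 <= g) (k_pos : 1 <= k) (n_large : k + 2 * g + 2 <= n.+1).

Local Notation T := (@tree_rel n (broom_parent k g)).
Local Notation S0 := (broom_cut n k).
Local Notation parent_lt := (@broom_parent_lt k g).
Local Notation parent_edge := (@tree_parent_edge n (broom_parent k g) parent_lt).

Lemma broom_pendant (S : {set 'I_n.+1}) (x : 'I_n.+1) : is_Rg_cutset g T S ->
  x \notin S -> 0 < x -> x != k :> nat -> x != k.+1 :> nat ->
  inord (broom_parent k g x) \notin S.
Proof.
move=> S_cut xS x_pos xk xk1; apply: Rg_cutset_pendant g_pos S_cut xS _ => y xy.
have px_lt : broom_parent k g x < n.+1.
  by have := parent_lt x_pos; have := ltn_ord x; lia.
have leaf := @broom_leaf k g _ x_pos xk xk1.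
by apply: val_inj; rewrite /= inordK //; apply: tree_leaf_nbr x_pos leaf xy.
Qed.

(* Every R_g-cutset of the broom contains the root: otherwise each vertex
   outside S reaches 0 through its parent (and grandparent) in G - S. *)
Lemma broom_root_in_cutset (S : {set 'I_n.+1}) : is_Rg_cutset g T S -> ord0 \in S.
Proof.
move=> S_cut; apply/negPn/negP => rootS.
apply: (hub_not_cutset (r := ord0) _ _ (proj1 S_cut)).
  exact: tree_sym.
move=> x xS; have [x0|x_pos] := posnP x.
  by rewrite (_ : x = ord0) //; apply: val_inj.
have edge_in (u v : 'I_n.+1) : u \notin S -> v \notin S -> 0 < v ->
    u = broom_parent k g v :> nat -> connect (del_rel T S) u v.
  move=> uS vS v_pos uv; apply: connect1; rewrite /del_rel uS vS !andbT.
  have -> : u = inord (broom_parent k g v) by rewrite -uv inord_val.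
  exact: parent_edge.
have [px|px] := eqVneq (broom_parent k g x) 0; first exact: edge_in.
have x_big : k.+1 < x.
  by move: px; rewrite /broom_parent; case: ifP => ?; [|case: ifP => ?]; lia.
have px_lt : broom_parent k g x < n.+1 := ltn_trans (parent_lt x_pos) (ltn_ord x).
set p : 'I_n.+1 := inord (broom_parent k g x).
have p_val : p = broom_parent k g x :> nat by rewrite /p /= inordK.
have pS : p \notin S by apply: broom_pendant => //; lia.
have pp : broom_parent k g p = 0.
  by rewrite p_val broom_parent_root // broom_parent_le.
have p_pos : 0 < p by rewrite p_val lt0n.
by apply: (connect_trans (y := p)); apply: edge_in; rewrite ?pp.
Qed.

(* Lower bound kappa_g >= k: with the root in S, the leaves 1..k-1 of the root
   must be in S as well. *)
Lemma broom_cutset_large (S : {set 'I_n.+1}) : is_Rg_cutset g T S -> k <= #|S|.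
Proof.
move=> S_cut; have rootS := broom_root_in_cutset S_cut.
have sub : S0 \subset S.
  apply/subsetP => v; rewrite inE => v_lt; have [v0|v_pos] := posnP v.
    by rewrite (_ : v = ord0) //; apply: val_inj.
  have parent_root : inord (broom_parent k g v) = ord0 :> 'I_n.+1.
    by apply: val_inj; rewrite /= broom_parent_root ?inordK //; lia.
  apply: contraT => vS; have := broom_pendant S_cut vS v_pos.
  by rewrite parent_root rootS; apply; apply/eqP; lia.
by rewrite -(card_broom_cut (_ : k <= n.+1)) ?subset_leq_card //; lia.
Qed.

Local Notation D := (del_rel T S0).

Lemma broom_to_hub (x : 'I_n.+1) (h : nat) : k <= h <= k.+1 -> k <= x ->
  (x == h :> nat) || (broom_parent k g x == h) -> connect D x (inord h).
Proof.
move=> h_hub kx; have h_lt : h < n.+1 by lia.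
have [xh _|xh /= /eqP pxh] := eqVneq (x : nat) h.
  by rewrite (_ : inord h = x) //; apply: val_inj; rewrite /= inordK -?xh.
have x_pos : 0 < x by lia.
apply: connect1; rewrite /del_rel !inE inordK // -!leqNgt kx.
by rewrite tree_sym -pxh parent_edge //= pxh; case/andP: h_hub.
Qed.

Lemma broom_children_k :
  children n (broom_parent k g) k = [set v : 'I_n.+1 | k.+2 <= v < k + g + 2].
Proof. by apply/setP => v; rewrite !inE /broom_parent; case: ifP => ?; [|case: ifP => ?]; lia. Qed.

Lemma broom_children_k1 :
  children n (broom_parent k g) k.+1 = [set v : 'I_n.+1 | k + g + 2 <= v < n.+1].
Proof.
apply/setP => v; have := ltn_ord v; rewrite !inE /broom_parent => v_lt.
by case: ifP => ?; [|case: ifP => ?]; lia.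
Qed.

(* Every component of G - S0 contains a hub with all its children, hence has
   at least g + 1 vertices. *)
Lemma broom_components_large (x : 'I_n.+1) :
  x \notin S0 -> g.+1 <= #|comp_of T S0 x|.
Proof.
rewrite inE -leqNgt => kx.
have hub_out h : k <= h -> children n (broom_parent k g) h \subset ~: S0.
  move=> kh; apply/subsetP => v; rewrite !inE -leqNgt => /andP [v_pos /eqP pv].
  by have := parent_lt v_pos; lia.
have hub_large h : k <= h <= k.+1 -> (x == h :> nat) || (broom_parent k g x == h) ->
    #|children n (broom_parent k g) h|.+1 <= #|comp_of T S0 x|.
  move=> h_hub x_h; have h_lt : h < n.+1 by lia.
  have := children_comp_card parent_lt _ (broom_to_hub h_hub kx x_h).
  rewrite inordK //; apply; case/andP: h_hub => kh _; last exact: hub_out.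
  by rewrite inE inordK // -leqNgt.
have [branch_k|branch_k1] := boolP ((x == k :> nat) || (broom_parent k g x == k)).
  by have := hub_large k _ branch_k; rewrite broom_children_k card_interval; lia.
have branch_k1' : (x == k.+1 :> nat) || (broom_parent k g x == k.+1).
  move: branch_k1; rewrite /broom_parent; case: ifP => ?; [|case: ifP => ?]; lia.
by have := hub_large k.+1 _ branch_k1'; rewrite broom_children_k1 card_interval; lia.
Qed.

(* The branch {k} u children k is closed under the edges of G - S0, so the two
   hubs are separated. *)
Lemma broom_cut_separates : ~~ connect D (inord k) (inord k.+1).
Proof.
pose branch := [set v : 'I_n.+1 | (v == k :> nat) || (broom_parent k g v == k)].
have branch_closed : closed D branch.
  have step u w : D u w -> u \in branch -> w \in branch.
    rewrite /del_rel /tree_rel !inE -!leqNgt.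
    case/and3P => /orP [/andP [_ /eqP e_uw]|/andP [_ /eqP e_uw]] ku kw; move: e_uw;
    by rewrite /broom_parent; repeat case: ifP => ?; lia.
  have D_sym : symmetric D := del_rel_sym _ (tree_sym (broom_parent k g)).
  by move=> u w Duw; apply/idP/idP; apply: step; rewrite // D_sym.
apply/negP => /(closed_connect branch_closed).
by rewrite !inE !inordK ?broom_parent_root; lia.
Qed.

Lemma broom_cut_Rg_cutset : is_Rg_cutset g T S0.
Proof.
split; last exact: broom_components_large.
by exists (inord k), (inord k.+1); rewrite !inE !inordK -?leqNgt ?broom_cut_separates //; lia.
Qed.

End Broom.

Theorem proposition5p1 (n g k : nat) (hg : 1 <= g) (hk1 : 1 <= k)
    (hk2 : k <= n - 2 * g - 2) :
  (exists e : rel 'I_n,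
      [/\ simple_graph e, connected_graph e, kappa_g_eq g e k &
          num_edges e = n - 1]) /\
  (forall e : rel 'I_n,
      simple_graph e -> connected_graph e -> kappa_g_eq g e k ->
      n - 1 <= num_edges e).
Proof.
split; last by move=> e e_simple e_conn _; exact: connected_num_edges.
case: n hk2 => [|n] hk2; first by lia.
have n_large : k + 2 * g + 2 <= n.+1 by lia.
have parent_lt := @broom_parent_lt k g.
exists (@tree_rel n (broom_parent k g)); split.
- exact: tree_simple.
- exact: tree_connected.
- split; last exact: broom_cutset_large.
  by exists (broom_cut n k); rewrite card_broom_cut; [split => //; exact: broom_cut_Rg_cutset|lia].
- by rewrite tree_num_edges // subn1.
Qed.
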